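(* Let $r\ge 1$ be an integer and let $A$ and $B$ be disjoint vertex sets with $|B|\le |A|/r^{r+3}$. Suppose the edges of the complete bipartite graph between $A$ and $B$ are $r$-locally coloured. Then all vertices of $B$ can be covered by at most $r^2$ vertex-disjoint monochromatic cycles of this bipartite graph.
   Context: An edge colouring of a graph is an $r$-local colouring if the edges incident to any vertex are coloured with at most $r$ colours; the total number of colours is not restricted. A cycle is monochromatic if all its edges have the same colour; a single vertex and a single edge are also considered to be cycles. *)

From mathcomp Require Import all_boot.
Set Implicit Arguments. Unset Strict Implicit. Unset Printing Implicit Defensive.

Section Bip.
Variables (A B : finType) (C : eqType).

(* The complete bipartite graph between A and B has vertex set A + B
   (disjoint union); an edge colouring assigns a colour c a b to each
   edge ab, a : A, b : B. *)

Definition bip_edge (c : A -> B -> C) (k : C) : rel (A + B) :=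
  fun x y => match x, y with
             | inl a, inr b => c a b == k
             | inr b, inl a => c a b == k
             | _, _ => false
             end.

Definition r_local (r : nat) (c : A -> B -> C) : Prop :=
  (forall a : A, size (undup [seq c a b | b <- enum B]) <= r) /\
  (forall b : B, size (undup [seq c a b | a <- enum A]) <= r).

(* s is a monochromatic cycle of colour k: a single vertex, a single
   edge (s = [:: x; y] with xy an edge of colour k), or a genuine cycle
   x1 x2 ... xn x1 of distinct vertices all of whose edges have colour k. *)
Definition mono_cycle (c : A -> B -> C) (k : C) (s : seq (A + B)) : bool :=
  uniq s && ((size s == 1) || ((1 < size s) && cycle (bip_edge c k) s)).

Definition disjoint_mono_cycles (c : A -> B -> C) (P : seq (seq (A + B))) : Prop :=
  (forall s, s \in P -> exists k, mono_cycle c k s) /\ uniq (flatten P).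

End Bip.

From mathcomp Require Import all_boot zify.

(* Give each b in B its majority colour k(b) and the set N(b) of its neighbours in that
   colour, so |N(b)| >= |A|/r, and link b, b' when k(b) = k(b') and
   |N(b) :&: N(b')| >= |B|.  By Posa's argument the vertices of any graph are covered by
   at most alpha disjoint cycles, alpha its independence number.  Among r^2+1 pairwise
   unlinked vertices, neighbourhoods of equal colour overlap in fewer than |B| vertices,
   while each a in A sees at most r colours; counting the sum of the |N(b)| both ways
   contradicts |A| >= r^(r+3) |B|, so alpha <= r^2.  Finally a linked cycle
   b_1 ... b_m lifts to the monochromatic cycle b_1 a_1 b_2 ... b_m a_m by picking each
   a_i greedily in N(b_i) :&: N(b_i+1) outside the fewer than |B| vertices of A used so far. *)
Set Implicit Arguments. Unset Strict Implicit. Unset Printing Implicit Defensive.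

Section CyclePartition.
Variables (T : finType) (adj : rel T).
Hypotheses (adj_sym : symmetric adj) (adj_irr : irreflexive adj).

Definition graph_cycle (s : seq T) : bool :=
  uniq s && ((size s == 1) || ((1 < size s) && cycle adj s)).

Definition independent (I : {set T}) : Prop := {in I &, forall x y, ~~ adj x y}.

Lemma independent_setU1 (I : {set T}) y :
  independent I -> {in I, forall w, ~~ adj y w} -> independent (y |: I).
Proof.
move=> indI yI a b; rewrite !inE => /orP [/eqP -> | aI] /orP [/eqP -> | bI].
- by rewrite adj_irr.
- exact: yI.
- by rewrite adj_sym yI.
- exact: indI.
Qed.

Lemma extend_to_maximal_path (X : {set T}) y q :
  path adj y q -> uniq (y :: q) -> all (mem X) (y :: q) ->
  exists y' q', [/\ path adj y' q', uniq (y' :: q'), all (mem X) (y' :: q') &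
    {in X, forall w, adj y' w -> w \in y' :: q'}].
Proof.
have [m] := ubnP (#|X| - size q); elim: m y q => // m IH y q ltm yq_path yq_uniq yq_X.
have size_le : size (y :: q) <= #|X|.
  by rewrite cardE; apply: (uniq_leq_size yq_uniq) => z /(allP yq_X); rewrite mem_enum.
case: (boolP [exists w in X, adj y w && (w \notin y :: q)]) => [|maximal].
  case/exists_inP => w wX /andP [yw wNq].
  apply: (IH w (y :: q)) => /=; first by move: size_le => /=; lia.
  - by rewrite adj_sym yw.
  - by rewrite wNq.
  - by rewrite wX.
exists y, q; split=> // w wX yw; apply: contraNT maximal => wNq.
by apply/exists_inP; exists w; rewrite ?yw.
Qed.

Lemma split_at_last_neighbour y q : exists j, [/\ j <= size q,
  0 < j -> adj y (last y (take j q)) & {in drop j q, forall w, ~~ adj y w}].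
Proof.
elim: q => [|x q [j [le_j last_j drop_j]]]; first by exists 0.
have [j0|j_gt0] := posnP j; last first.
  exists j.+1; split=> //= _.
  move: (last_j j_gt0); case: (take j q) (size_takel le_j) => // j0.
  by rewrite -j0 in j_gt0.
rewrite j0 drop0 in drop_j.
case yx: (adj y x); first by exists 1; split; rewrite //= ?take0 ?drop0.
exists 0; split=> // w; rewrite drop0 inE => /orP [/eqP -> | wq]; first by rewrite yx.
exact: drop_j.
Qed.

Lemma graph_cycle_prefix y q j : path adj y q -> uniq (y :: q) ->
  (0 < j -> adj y (last y (take j q))) -> graph_cycle (y :: take j q).
Proof.
move=> yq_path yq_uniq last_j.
rewrite /graph_cycle (take_uniq j.+1 yq_uniq) /=.
have [->|j_gt0] := posnP j; first by rewrite take0.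
rewrite rcons_path take_path //= adj_sym.
by case: (take j q) (last_j j_gt0) => [|z t] //=; rewrite adj_irr.
Qed.

(* Posa: peel off a maximal path from its end [y]; the prefix up to the last
   neighbour of [y] is a cycle, and [y] has no neighbour among the remaining vertices. *)
Lemma cycle_partition (X : {set T}) :
  exists P : seq (seq T), [/\ all graph_cycle P, uniq (flatten P), flatten P =i X &
    exists I : {set T}, [/\ I \subset X, independent I & size P = #|I|]].
Proof.
have [n] := ubnP #|X|; elim: n X => // n IH X ltX.
have [-> | [x xX]] := set_0Vmem X.
  exists [::]; split=> //= [z|]; first by rewrite inE.
  by exists set0; rewrite sub0set cards0; split=> // a b; rewrite inE.
have x_X : all (mem X) [:: x] by rewrite /= xX.
have [y [q [yq_path yq_uniq yq_X maximal]]] := extend_to_maximal_path (q := [::]) isT isT x_X.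
have [j [_ last_j drop_j]] := split_at_last_neighbour y q.
set s := y :: take j q.
have s_uniq : uniq s := take_uniq j.+1 yq_uniq.
have sX : {subset s <= X}.
  by move=> z /(@mem_take j.+1 _ (y :: q)) /(allP yq_X).
set X' := X :\: [set z | z \in s].
have yX : y \in X by apply: sX; rewrite inE eqxx.
have [|P' [P'_cycles P'_uniq P'_X' [I' [I'X' indI' sizeP']]]] := IH X'.
  rewrite -ltnS (leq_trans _ ltX) // ltnS proper_card // properE subsetDl /=.
  by apply/subsetPn; exists y; rewrite // !inE eqxx.
have yNX' : {in X', forall w, ~~ adj y w}.
  move=> w; rewrite !inE => /andP [wNs wX]; apply/negP => yw.
  move: (maximal w wX yw) wNs; rewrite !inE -[q in w \in q](cat_take_drop j) mem_cat.
  case/or3P => [/eqP wy _ | -> | wd _]; rewrite ?orbT //.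
    by move: yw; rewrite wy adj_irr.
  by move: yw (drop_j w wd) => ->.
exists (s :: P'); split.
- by rewrite /= P'_cycles andbT graph_cycle_prefix.
- rewrite [uniq _]cat_uniq s_uniq P'_uniq andbT.
  by apply/hasPn => z; rewrite P'_X' !inE => /andP [].
- move=> z; rewrite mem_cat P'_X' in_setD in_set.
  by case: (boolP (z \in s)) => [/sX ->|].
- have yNI' : y \notin I' by apply/negP => /(subsetP I'X'); rewrite !inE eqxx.
  exists (y |: I'); split.
  + by rewrite subUset sub1set yX (subset_trans I'X' (subsetDl _ _)).
  + by apply: independent_setU1 => // w /(subsetP I'X'); apply: yNX'.
  + by rewrite cardsU1 yNI' /= sizeP'.
Qed.

End CyclePartition.

Lemma card_bigcup_le (T I : finType) (P : pred I) (F : I -> {set T}) :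
  #|\bigcup_(i | P i) F i| <= \sum_(i | P i) #|F i|.
Proof.
apply: (big_ind2 (fun (X : {set T}) n => #|X| <= n)) => [|X1 n1 X2 n2 le1 le2|//].
  by rewrite cards0.
exact: leq_trans (leq_card_setU X1 X2).1 (leq_add le1 le2).
Qed.

Lemma sqS_le_double_pow_self (r : nat) : 0 < r -> (r ^ 2).+1 <= 2 * r ^ r.
Proof.
move=> r_gt0; have [le_r1|lt1r] := leqP r 1; first by have -> : r = 1 by lia.
have : r ^ 2 <= r ^ r by apply: leq_pexp2l.
lia.
Qed.

Lemma bin2_sqS_mul_lt (r m n : nat) : 0 < r -> 0 < m ->
  m * r ^ (r + 3) <= n -> r * ((m - 1) * 'C((r ^ 2).+1, 2)) < n.
Proof.
move=> r_gt0 m_gt0 le_n.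
have bin : 'C((r ^ 2).+1, 2) * 2 <= (r ^ 2).+1 * r ^ 2.
  by rewrite bin2 -[X in _ <= X](odd_double_half) -muln2 leq_addl.
have pow := sqS_le_double_pow_self r_gt0.
have R_gt0 : 0 < r ^ r by rewrite expn_gt0 r_gt0.
rewrite expnD in le_n.
set C := 'C(_, 2) in bin *; set N := r ^ 2 in bin pow *; set R := r ^ r in pow R_gt0 le_n *.
have r3 : r ^ 3 = r * N by rewrite /N -expnS.
rewrite r3 in le_n.
rewrite -(ltn_pmul2r (isT : 0 < 2)).
apply: (@leq_trans (2 * (m * (R * (r * N))))); last by lia.
apply: (@leq_ltn_trans (r * (m - 1) * (2 * R * N))); last first.
  have K_gt0 : 0 < R * (r * N) by rewrite !muln_gt0 R_gt0 r_gt0.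
  nia.
apply: (@leq_trans (r * (m - 1) * (N.+1 * N))).
  by rewrite -!mulnA; do 2 rewrite leq_mul2l; rewrite bin !orbT.
by rewrite leq_mul2l leq_mul2r pow !orbT.
Qed.

Section MajorityColour.
Variables (A B : finType) (C : eqType) (c : A -> B -> C) (r : nat).
Hypothesis c_local : r_local r c.
Variable a0 : A.

Definition colour_class b a := [set a' | c a' b == c a b].
Definition major_colour b := c [arg max_(a > a0) #|colour_class b a|] b.
Definition major_nbhd b := [set a | c a b == major_colour b].

Lemma colour_class_le b a : #|colour_class b a| <= #|major_nbhd b|.
Proof. by rewrite /major_nbhd /major_colour; case: arg_maxnP => // a' _; apply. Qed.

Lemma major_nbhd_large b : #|A| <= r * #|major_nbhd b|.
Proof.
set classes := [set colour_class b a | a : A].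
have cover_classes : cover classes = setT.
  apply/setP => a; rewrite inE; apply/bigcupP; exists (colour_class b a).
    exact: imset_f.
  by rewrite inE.
rewrite -cardsT -cover_classes; apply: leq_trans (leq_card_cover classes).1 _.
apply: leq_trans (_ : \sum_(X in classes) #|major_nbhd b| <= _).
  by apply: leq_sum => X /imsetP [a _ ->]; apply: colour_class_le.
rewrite sum_nat_const leq_mul2r; apply/orP; right.
apply: leq_trans (c_local.2 b); rewrite -(size_map (fun k => [set a | c a b == k])).
apply: leq_trans (card_size _); apply: subset_leq_card; apply/subsetP => X.
case/imsetP => a _ ->; apply/mapP; exists (c a b) => //.
by rewrite mem_undup; apply/mapP; exists a; rewrite ?mem_enum.
Qed.

Definition linked : rel B := fun b b' =>
  [&& b != b', major_colour b == major_colour b' &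
      #|B| <= #|major_nbhd b :&: major_nbhd b'|].

Lemma linked_sym : symmetric linked.
Proof. by move=> b b'; rewrite /linked eq_sym [major_colour b == _]eq_sym setIC. Qed.

Lemma linked_irr : irreflexive linked.
Proof. by move=> b; rewrite /linked eqxx. Qed.

Section IndependentSequence.
Variables (s : nat) (E : 'I_s -> B).
Hypotheses (E_inj : injective E) (E_indep : forall i j, ~~ linked (E i) (E j)).

Definition earlier_nbhd (i : 'I_s) :=
  \bigcup_(j < s | (j < i) && (major_colour (E j) == major_colour (E i)))
    major_nbhd (E j).

(* A vertex [a] lies in the new part of at most [r] neighbourhoods, one per colour at [a]. *)
Lemma sum_new_nbhd_le :
  \sum_(i < s) #|major_nbhd (E i) :\: earlier_nbhd i| <= r * #|A|.
Proof.
rewrite mulnC -sum_nat_const.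
under [X in X <= _]eq_bigr do rewrite -sum1_card.
rewrite (exchange_big_dep xpredT) //=; apply: leq_sum => a _.
rewrite sum1dep_card; set S := [set i | _].
have new_inj : {in S &, injective (fun i => major_colour (E i))}.
  suff older i j : i \in S -> j \in S ->
      major_colour (E i) = major_colour (E j) -> j < i -> False.
    move=> i j iS jS eq_ij; case: (ltngtP i j) => [lt_ij|lt_ji|]; last exact: ord_inj.
    - by case: (older j i jS iS (esym eq_ij) lt_ij).
    - by case: (older i j iS jS eq_ij lt_ji).
  rewrite !inE => /andP [aNearlier _] /andP [_ a_j] eq_ij lt_ji.
  apply: (negP aNearlier); apply/bigcupP; exists j; first by rewrite lt_ji eq_ij /=.
  by rewrite inE.
apply: leq_trans (c_local.1 a); rewrite cardE -(size_map (fun i => major_colour (E i))).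
apply: uniq_leq_size.
  by rewrite map_inj_in_uniq ?enum_uniq // => i j; rewrite !mem_enum; apply: new_inj.
move=> k /mapP [i]; rewrite mem_enum !inE => /andP [_ /eqP a_i] ->.
by rewrite mem_undup; apply/mapP; exists (E i); rewrite ?mem_enum.
Qed.

Lemma sum_old_nbhd_le :
  \sum_(i < s) #|major_nbhd (E i) :&: earlier_nbhd i| <= (#|B| - 1) * 'C(s, 2).
Proof.
rewrite -bin2_sum big_mkord big_distrr /=; apply: leq_sum => i _.
set same := fun j : 'I_s => (j < i) && (major_colour (E j) == major_colour (E i)).
have sub : major_nbhd (E i) :&: earlier_nbhd i \subset
    \bigcup_(j < s | same j) (major_nbhd (E i) :&: major_nbhd (E j)).
  apply/subsetP => a; rewrite inE => /andP [a_i /bigcupP [j same_j a_j]].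
  by apply/bigcupP; exists j; rewrite // inE a_i.
apply: leq_trans (subset_leq_card sub) (leq_trans (card_bigcup_le _ _) _).
apply: (@leq_trans (\sum_(j < s | j < i) (#|B| - 1))); last first.
  rewrite -(big_ord_widen _ (fun=> #|B| - 1) (ltnW (ltn_ord i))).
  by rewrite sum_nat_const card_ord mulnC.
rewrite [X in _ <= X]big_mkcond [X in X <= _]big_mkcond /=; apply: leq_sum => j _.
rewrite /same; case: ifP => [/andP [lt_ji same_ji] | _] //=.
have : E j != E i by apply: contraTneq lt_ji => /E_inj ->; rewrite ltnn.
move: (E_indep j i); rewrite /linked setIC same_ji => /[swap] -> /=.
by rewrite lt_ji -ltnNge; lia.
Qed.

Lemma independent_sequence_count :
  s * #|A| <= r * (r * #|A| + (#|B| - 1) * 'C(s, 2)).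
Proof.
apply: leq_trans (_ : r * \sum_(i < s) #|major_nbhd (E i)| <= _).
  rewrite big_distrr /= -[s in s * _]card_ord -sum_nat_const.
  by apply: leq_sum => i _; apply: major_nbhd_large.
rewrite leq_mul2l; apply/orP; right.
rewrite -[X in X <= _](eq_bigr _ (fun i _ => cardsID (earlier_nbhd i) _)) big_split /= addnC.
exact: leq_add sum_new_nbhd_le sum_old_nbhd_le.
Qed.

End IndependentSequence.

Lemma independent_card_le (I : {set B}) : 0 < r ->
  #|B| * r ^ (r + 3) <= #|A| -> independent linked I -> #|I| <= r ^ 2.
Proof.
move=> r_gt0 large indI; rewrite leqNgt; apply/negP => lt_I.
pose E (i : 'I_(r ^ 2).+1) := enum_val (widen_ord lt_I i).
have E_inj : injective E by move=> i j /enum_val_inj [] /ord_inj.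
have E_indep i j : ~~ linked (E i) (E j) by apply: indI; apply: enum_valP.
have B_gt0 : 0 < #|B| := leq_trans (leq_ltn_trans (leq0n _) lt_I) (max_card I).
have := independent_sequence_count E_inj E_indep.
have := bin2_sqS_mul_lt r_gt0 B_gt0 large.
rewrite mulSn mulnDr [r * (r * _)]mulnA mulnn; lia.
Qed.

Definition allowed (U : {set A}) (t : seq B) (v : A + B) : bool :=
  match v with inl a => a \notin U | inr b => b \in t end.

Lemma allowed_mono (U U' : {set A}) (t t' : seq B) v :
  U \subset U' -> {subset t <= t'} -> allowed U' t v -> allowed U t' v.
Proof.
move=> sub_U sub_t; case: v => [a|b] /=; last exact: sub_t.
exact/contra/subsetP.
Qed.

Lemma common_nbr_outside x y (U : {set A}) : linked x y -> #|U| < #|B| ->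
  exists2 a, a \notin U & (c a x == major_colour x) && (c a y == major_colour x).
Proof.
case/and3P => _ /eqP same common lt_U.
have : 0 < #|major_nbhd x :&: major_nbhd y :\: U|.
  rewrite cardsD; have := subset_leq_card (subsetIr (major_nbhd x :&: major_nbhd y) U).
  lia.
case/card_gt0P => a; rewrite !inE => /and3P [aNU ax ay].
by exists a; rewrite // ax same ay.
Qed.

(* The [size t + 1] connecting vertices are chosen one at a time; [#|B|] common
   neighbours leave room for each of them outside [U] and the earlier choices. *)
Lemma lift_path z (t : seq B) x (U : {set A}) : path linked x t ->
  linked (last x t) z -> uniq (x :: t) -> #|U| + size t + 1 <= #|B| ->
  exists s : seq (A + B),
    [/\ path (bip_edge c (major_colour x)) (inr x) (rcons s (inr z)), uniq s,
        all (allowed U t) s, {in t, forall b, inr b \in s}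
      & #|[set a | inl a \in s]| <= size t + 1].
Proof.
elim: t x U => [|y t IH] x U /= x_path last_z xt_uniq size_U.
  have lt_U : #|U| < #|B| by rewrite addn0 addn1 in size_U.
  have [a aNU /andP [ax az]] := common_nbr_outside last_z lt_U.
  exists [:: inl a]; split=> //=; rewrite ?ax ?az ?aNU //.
  by rewrite -(cards1 a) subset_leq_card //; apply/subsetP => a'; rewrite !inE => /eqP [->].
case/andP: x_path => xy y_path; case/and3P: xt_uniq => _ yNt t_uniq.
have lt_U : #|U| < #|B| by apply: leq_trans size_U; lia.
have [a aNU /andP [ax ay]] := common_nbr_outside xy lt_U.
have yt_uniq : uniq (y :: t) by rewrite /= yNt.
have size_aU : #|a |: U| + size t + 1 <= #|B|.
  by apply: leq_trans size_U; rewrite cardsU1 aNU; lia.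
have [s [s_path s_uniq s_allowed s_cover s_card]] :=
  IH y (a |: U) y_path last_z yt_uniq size_aU.
have aNs : inl a \notin s.
  by apply/negP => /(allP s_allowed); rewrite /= in_setU1 eqxx.
have yNs : inr y \notin s by apply/negP => /(allP s_allowed); rewrite /= (negbTE yNt).
have same : major_colour y = major_colour x by case/and3P: xy => _ /eqP ->.
exists [:: inl a, inr y & s]; split.
- by rewrite /= ax ay -same s_path.
- by rewrite /= !inE negb_or /= aNs yNs s_uniq.
- rewrite /= aNU inE eqxx /=; apply/allP => v /(allP s_allowed).
  by apply: allowed_mono => [|b bt]; rewrite ?subsetU1 // inE bt orbT.
- by move=> b; rewrite !inE => /orP [/eqP -> | /s_cover ->]; rewrite ?eqxx ?orbT.
- apply: leq_trans (_ : #|a |: [set a' | inl a' \in s]| <= _).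
    by apply/subset_leq_card/subsetP => a'; rewrite !inE => /or3P [/eqP [->]| //| ->];
      rewrite ?eqxx ?orbT.
  by rewrite cardsU1 addn1 -add1n leq_add ?leq_b1 // -addn1.
Qed.

Lemma lift_cycle (t : seq B) (U : {set A}) : graph_cycle linked t ->
  #|U| + size t <= #|B| ->
  exists s, [/\ exists k, mono_cycle c k s, all (allowed U t) s,
    {in t, forall b, inr b \in s} & #|[set a | inl a \in s]| <= size t].
Proof.
case: t => [|x [|y t]] //= t_cycle size_U.
  exists [:: inr x]; split.
  - by exists (major_colour x).
  - by rewrite /= inE eqxx.
  - by move=> b; rewrite !inE => /eqP ->.
  - by rewrite (_ : [set a | _] = set0) ?cards0 //; apply/setP => a; rewrite !inE.
case/andP: t_cycle => xt_uniq /orP [//|/andP [_]].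
rewrite /= rcons_path => /and3P [xy yt_path last_x].
have xt_path : path linked x (y :: t) by rewrite /= xy.
have size_U' : #|U| + size (y :: t) + 1 <= #|B| by rewrite -addnA addn1.
have [[|v s] [s_path s_uniq s_allowed s_cover s_card]] :=
  lift_path xt_path last_x xt_uniq size_U'; first by [].
have xNs : inr x \notin v :: s.
  apply/negP => /(allP s_allowed) /= x_yt.
  by move: xt_uniq; rewrite /= x_yt.
exists [:: inr x, v & s]; split.
- exists (major_colour x); apply/andP; split; first by rewrite cons_uniq xNs s_uniq.
  by apply/orP; right; apply/andP; split; last exact: s_path.
- apply/allP => w; rewrite inE => /orP [/eqP -> | /(allP s_allowed)].
    by rewrite /= inE eqxx.
  by apply: allowed_mono => // b bt; rewrite inE bt orbT.
- move=> b; rewrite inE => /orP [/eqP -> | /s_cover w_s]; first by rewrite inE eqxx.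
  by rewrite inE w_s orbT.
- apply: leq_trans (_ : #|[set a | inl a \in v :: s]| <= _); last by rewrite addn1 in s_card.
  by apply/subset_leq_card/subsetP => a; rewrite !inE.
Qed.

Lemma lift_cycles (P : seq (seq B)) (U : {set A}) : all (graph_cycle linked) P ->
  uniq (flatten P) -> #|U| + size (flatten P) <= #|B| ->
  exists P' : seq (seq (A + B)), [/\ size P' = size P,
    forall s, s \in P' -> exists k, mono_cycle c k s, uniq (flatten P'),
    all (allowed U (flatten P)) (flatten P') &
    {in flatten P, forall b, inr b \in flatten P'}].
Proof.
elim: P U => [|t P IH] U /=; first by exists [::].
case/andP=> t_cycle P_cycles; rewrite cat_uniq size_cat.
case/and3P=> _ /hasPn tNP P_uniq size_U.
have size_Ut : #|U| + size t <= #|B| by apply: leq_trans size_U; rewrite addnA leq_addr.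
have [s [[k s_mono] s_allowed s_cover s_card]] := lift_cycle t_cycle size_Ut.
set W := [set a | inl a \in s].
have [|P' [size_P' P'_mono P'_uniq P'_allowed P'_cover]] := IH (U :|: W) P_cycles P_uniq.
  apply: leq_trans size_U; rewrite addnA leq_add2r.
  exact: leq_trans (leq_card_setU U W).1 (leq_add (leqnn _) s_card).
exists (s :: P'); split=> /=.
- by rewrite size_P'.
- by move=> s'; rewrite inE => /orP [/eqP -> | /P'_mono //]; exists k.
- rewrite cat_uniq P'_uniq andbT; case/andP: s_mono => -> _ /=.
  apply/hasPn => v /(allP P'_allowed); apply: contraL.
  case: v => [a|b] v_s /=; first by rewrite negbK !inE v_s orbT.
  by move: (allP s_allowed _ v_s) => /= /contraL; apply; apply: tNP.
- rewrite all_cat; apply/andP; split; apply/allP => v.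
    by move/(allP s_allowed); apply: allowed_mono => // b bt; rewrite mem_cat bt.
  move/(allP P'_allowed); apply: allowed_mono => [|b bP]; first exact: subsetUl.
  by rewrite mem_cat bP orbT.
- by move=> b; rewrite !mem_cat => /orP [/s_cover | /P'_cover] ->; rewrite ?orbT.
Qed.

End MajorityColour.

Theorem lemma2p2 (r : nat) (A B : finType) (C : eqType) (c : A -> B -> C) :
  1 <= r ->
  #|B| * r ^ (r + 3) <= #|A| ->
  r_local r c ->
  exists P : seq (seq (A + B)),
    [/\ disjoint_mono_cycles c P,
        size P <= r ^ 2 &
        forall b : B, exists2 s, s \in P & inr b \in s].
Proof.
move=> r_gt0 large c_local.
have [B0 | B_gt0] := posnP #|B|.
  by exists [::]; split=> // b; move: (card0_eq B0 b); rewrite inE.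
have /card_gt0P [a0 _] : 0 < #|A|.
  by apply: leq_trans large; rewrite muln_gt0 B_gt0 expn_gt0 r_gt0.
have [P [P_cycles P_uniq P_B [I [_ indI size_P]]]] :=
  cycle_partition (linked_sym c a0) (linked_irr c a0) [set: B].
have size_flatten : #|@set0 A| + size (flatten P) <= #|B|.
  by rewrite cards0 -(card_uniqP P_uniq) max_card.
have [P' [size_P' P'_mono P'_uniq _ P'_cover]] := lift_cycles P_cycles P_uniq size_flatten.
exists P'; split=> //.
- by rewrite size_P' size_P (independent_card_le c_local r_gt0 large indI).
- by move=> b; apply/flattenP/P'_cover; rewrite P_B inE.
Qed.
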